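(* Let $\{D_1,D_2,D_3\}$ be a positively oriented orthonormal basis of $\mathbb{R}^3$ and $J$ a symmetric positive definite linear map on $\mathbb{R}^3$ having $D_3$ as an eigenvector. For a smooth curve $\Lambda:[0,T]\to SO(3)$ the following are equivalent: (i) (Lagrange–d'Alembert) $w\cdot d_3=0$ on $[0,T]$ and there is a continuous $\mu:[0,T]\to\mathbb{R}$ such that $$\frac{d}{d\iota}\Big|_{\iota=0}\int_0^T K(\Lambda_\iota,\dot\Lambda_\iota)\,dt+\int_0^T\mu\,\delta\theta\cdot d_3\,dt=0$$ for every smooth $\delta\theta:[0,T]\to\mathbb{R}^3$ with $\delta\theta(0)=\delta\theta(T)=0$, where $\Lambda_\iota=\exp[\iota\widehat{\delta\theta}]\Lambda$; (ii) there is $\mu:[0,T]\to\mathbb{R}$ such that for all $t$ $$\nabla_{\dot d_3}\pi_\perp+\pi_\parallel\dot d_3=0,\qquad \dot\pi_\parallel+\pi_\perp\cdot\dot d_3+\mu=0,\qquad w\cdot d_3=0 .$$ Moreover, for any $\Lambda$ and $\mu$, the system in (ii) is equivalent to $$\nabla_{\dot d_3}\pi_\perp=0,\qquad \pi_\perp\cdot\dot d_3+\mu=0,\qquad w_\parallel=0,$$ i.e. $\pi_\perp$ is parallel transported along the curve $d_3$ on the unit sphere.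
   Context: Notation: $d_i=\Lambda D_i$; for $v\in\mathbb{R}^3$, $\hat v a=v\times a$; the spatial angular velocity $w$ and convected angular velocity $W$ are defined by $\dot\Lambda=\hat w\Lambda=\Lambda\hat W$, and $w_\parallel=w\cdot d_3$. The kinetic energy is $K=\tfrac12 W\cdot JW=\tfrac12 w\cdot jw$ with $j=\Lambda J\Lambda^T$. The spatial angular momentum is $\pi=jw$, split as $\pi=\pi_\perp+\pi_\parallel d_3$ with $\pi_\parallel=\pi\cdot d_3$, $\pi_\perp=(I-d_3\otimes d_3)\pi$. For a curve $v(t)$ with $v(t)\cdot d_3(t)=0$, $\nabla_{\dot d_3}v:=(I-d_3\otimes d_3)\dot v$ is the covariant derivative on the unit sphere along $d_3$. The constraint $w\cdot d_3=0$ is the non-twisting condition and $\mu$ the associated multiplier. *)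

From Stdlib Require Import Reals.
From Coquelicot Require Import Coquelicot.
Open Scope R_scope.

Record V3 := mkV3 { vx : R; vy : R; vz : R }.

Definition vzero : V3 := mkV3 0 0 0.
Definition vadd (a b : V3) : V3 := mkV3 (vx a + vx b) (vy a + vy b) (vz a + vz b).
Definition vsub (a b : V3) : V3 := mkV3 (vx a - vx b) (vy a - vy b) (vz a - vz b).
Definition vscale (c : R) (a : V3) : V3 := mkV3 (c * vx a) (c * vy a) (c * vz a).
Definition dot (a b : V3) : R := vx a * vx b + vy a * vy b + vz a * vz b.
Definition cross (a b : V3) : V3 :=
  mkV3 (vy a * vz b - vz a * vy b) (vz a * vx b - vx a * vz b) (vx a * vy b - vy a * vx b).

Definition vent (v : V3) (i : nat) : R :=
  match i with 0%nat => vx v | 1%nat => vy v | _ => vz v end.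
Definition vmk (f : nat -> R) : V3 := mkV3 (f 0%nat) (f 1%nat) (f 2%nat).

Record M3 := mkM3 { row1 : V3; row2 : V3; row3 : V3 }.

Definition ent (A : M3) (i j : nat) : R :=
  match i with 0%nat => vent (row1 A) j | 1%nat => vent (row2 A) j | _ => vent (row3 A) j end.
Definition mmk (f : nat -> nat -> R) : M3 :=
  mkM3 (vmk (f 0%nat)) (vmk (f 1%nat)) (vmk (f 2%nat)).

Definition mI : M3 := mmk (fun i j => if Nat.eqb i j then 1 else 0).
Definition mtr (A : M3) : M3 := mmk (fun i j => ent A j i).
Definition mmul (A B : M3) : M3 :=
  mmk (fun i j => ent A i 0 * ent B 0 j + ent A i 1 * ent B 1 j + ent A i 2 * ent B 2 j).
Definition mscale (c : R) (A : M3) : M3 := mmk (fun i j => c * ent A i j).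
Definition mapp (A : M3) (v : V3) : V3 := mkV3 (dot (row1 A) v) (dot (row2 A) v) (dot (row3 A) v).
Definition mcols (a b c : V3) : M3 := mtr (mkM3 a b c).
Definition mdet (A : M3) : R := dot (row1 A) (cross (row2 A) (row3 A)).
Fixpoint mpow (A : M3) (n : nat) : M3 :=
  match n with 0%nat => mI | S n => mmul A (mpow A n) end.

Definition mexp (A : M3) : M3 :=
  mmk (fun i j => Series (fun k => ent (mpow A k) i j / INR (Factorial.fact k))).

(** hat map (v x .) and its inverse vee on skew matrices *)
Definition hat (v : V3) : M3 :=
  mkM3 (mkV3 0 (- vz v) (vy v)) (mkV3 (vz v) 0 (- vx v)) (mkV3 (- vy v) (vx v) 0).
Definition vee (A : M3) : V3 := mkV3 (ent A 2 1) (ent A 0 2) (ent A 1 0).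

Definition in_SO3 (A : M3) : Prop := mmul (mtr A) A = mI /\ mdet A = 1.

Definition mderiv (L : R -> M3) (t : R) : M3 := mmk (fun i j => Derive (fun s => ent (L s) i j) t).
Definition vderiv (v : R -> V3) (t : R) : V3 := vmk (fun i => Derive (fun s => vent (v s) i) t).

Definition smooth_fun (f : R -> R) : Prop := forall (n : nat) (x : R), ex_derive_n f n x.
Definition smooth_M (L : R -> M3) : Prop :=
  forall i j, (i < 3)%nat -> (j < 3)%nat -> smooth_fun (fun t => ent (L t) i j).
Definition smooth_V (v : R -> V3) : Prop :=
  forall i, (i < 3)%nat -> smooth_fun (fun t => vent (v t) i).

Definition cont_on (a b : R) (f : R -> R) : Prop :=
  forall t, a <= t <= b -> forall eps, 0 < eps -> exists delta, 0 < delta /\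
    forall s, a <= s <= b -> Rabs (s - t) < delta -> Rabs (f s - f t) < eps.

Section Kin.
Variables (J : M3) (D3 : V3) (L : R -> M3).

Definition d3 (t : R) : V3 := mapp (L t) D3.
Definition w_sp (t : R) : V3 := vee (mmul (mderiv L t) (mtr (L t))).
Definition w_par (t : R) : R := dot (w_sp t) (d3 t).
Definition jmat (t : R) : M3 := mmul (L t) (mmul J (mtr (L t))).
Definition pi_sp (t : R) : V3 := mapp (jmat t) (w_sp t).
Definition pi_par (t : R) : R := dot (pi_sp t) (d3 t).
Definition pi_perp (t : R) : V3 := vsub (pi_sp t) (vscale (pi_par t) (d3 t)).
(** covariant derivative along d3 on the unit sphere *)
Definition cov_d3 (v : R -> V3) (t : R) : V3 :=
  vsub (vderiv v t) (vscale (dot (d3 t) (vderiv v t)) (d3 t)).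
End Kin.

Definition kinetic (J : M3) (L Ld : M3) : R :=
  let W := vee (mmul (mtr L) Ld) in / 2 * dot W (mapp J W).

Definition Lvar (L : R -> M3) (dth : R -> V3) (iota : R) (t : R) : M3 :=
  mmul (mexp (mscale iota (hat (dth t)))) (L t).

Definition action_var (J : M3) (T : R) (L : R -> M3) (dth : R -> V3) (iota : R) : R :=
  RInt (fun t => kinetic J (Lvar L dth iota t) (mderiv (Lvar L dth iota) t)) 0 T.

Definition sys_ii (J : M3) (D3 : V3) (L : R -> M3) (mu : R -> R) (t : R) : Prop :=
  vadd (cov_d3 D3 L (pi_perp J D3 L) t) (vscale (pi_par J D3 L t) (vderiv (d3 D3 L) t)) = vzero /\
  Derive (pi_par J D3 L) t + dot (pi_perp J D3 L t) (vderiv (d3 D3 L) t) + mu t = 0 /\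
  dot (w_sp L t) (d3 D3 L t) = 0.

Definition sys_pt (J : M3) (D3 : V3) (L : R -> M3) (mu : R -> R) (t : R) : Prop :=
  cov_d3 D3 L (pi_perp J D3 L) t = vzero /\
  dot (pi_perp J D3 L t) (vderiv (d3 D3 L) t) + mu t = 0 /\
  w_par D3 L t = 0.

From Stdlib Require Import Reals Lra Lia Psatz.
From Coquelicot Require Import Coquelicot.
Open Scope R_scope.

(* Perturbing [Lambda] by [exp (iota hat dth)] and expanding with Rodrigues' formula, the
   kinetic energy is [K + iota pi . dth' + O(iota^2)] uniformly in time, so the first
   variation of the action is [int pi . dth' = - int pi' . dth].  Testing (i) with
   [dth = t (T - t) g], where [g] is the component of [pi'] orthogonal to [d3], kills the
   multiplier term and leaves [int t (T - t) |g|^2 = 0], so [pi'] is parallel to [d3];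
   conversely [mu = d3 . pi'] then satisfies (i).  Since [D3] is an eigenvector of [J],
   [pi_par = lam w_par], so under the non-twisting condition [pi_par] vanishes identically,
   [pi_perp = pi], and both systems of (ii) reduce to [nabla pi_perp = 0], [w_par = 0] and
   an equation defining [mu]. *)

(* Coquelicot often leaves equalities at type [R_NormedModule], which [ring] and [field]
   do not recognise as [R]. *)
Ltac toR := match goal with |- ?x = ?y => change (@eq R x y) end.

Fixpoint Cn (n : nat) (f : R -> R) : Prop :=
  match n with
  | O => True
  | S n => (forall x, ex_derive f x) /\ Cn n (Derive f)
  end.

Definition smooth (f : R -> R) : Prop := forall n, Cn n f.

Lemma Cn_ext n f g : (forall x, f x = g x) -> Cn n f -> Cn n g.
Proof.
  revert f g; induction n as [|n IH]; simpl; auto.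
  intros f g E [Df Cf]; split.
  - intros x; exact (ex_derive_ext f g x E (Df x)).
  - apply (IH (Derive f)); auto. intros x; apply Derive_ext; auto.
Qed.

Lemma Cn_S n f : Cn (S n) f -> Cn n f.
Proof.
  revert f; induction n as [|n IH]; simpl; auto.
  intros f [Df Cf]; split; auto.
Qed.

Lemma Cn_plus n f g : Cn n f -> Cn n g -> Cn n (fun x => f x + g x).
Proof.
  revert f g; induction n as [|n IH]; simpl; auto.
  intros f g [Df Cf] [Dg Cg]; split.
  - intros x; apply (ex_derive_plus f g); auto.
  - apply (Cn_ext n (fun x => Derive f x + Derive g x)); auto.
    intros x; symmetry; apply (Derive_plus f g); auto.
Qed.

Lemma Cn_mult n f g : Cn n f -> Cn n g -> Cn n (fun x => f x * g x).
Proof.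
  revert f g; induction n as [|n IH]; simpl; auto.
  intros f g Cf Cg.
  pose proof (Cn_S n f Cf) as Cf'; pose proof (Cn_S n g Cg) as Cg'.
  destruct Cf as [Df Cf]; destruct Cg as [Dg Cg]; split.
  - intros x; apply ex_derive_mult; auto.
  - apply (Cn_ext n (fun x => Derive f x * g x + f x * Derive g x)).
    + intros x; symmetry; apply Derive_mult; auto.
    + apply Cn_plus; auto.
Qed.

Lemma Cn_const n c : Cn n (fun _ => c).
Proof.
  revert c; induction n as [|n IH]; intros c; simpl; auto; split.
  - intros; apply ex_derive_const.
  - apply (Cn_ext n (fun _ => 0)); auto. intros; rewrite Derive_const; auto.
Qed.

Lemma Cn_id n : Cn n (fun x => x).
Proof.
  destruct n; simpl; auto; split.
  - intros; apply ex_derive_id.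
  - apply (Cn_ext n (fun _ => 1)); [|apply Cn_const]. intros; rewrite Derive_id; auto.
Qed.

Lemma smooth_Derive f : smooth f -> smooth (Derive f).
Proof. intros H n; exact (proj2 (H (S n))). Qed.

Lemma smooth_ex_derive f x : smooth f -> ex_derive f x.
Proof. intros H; exact (proj1 (H 1%nat) x). Qed.

Lemma Cn_comp n s g : smooth s -> Cn n g -> Cn n (fun x => s (g x)).
Proof.
  revert s g; induction n as [|n IH]; simpl; auto.
  intros s g Hs Cg. pose proof (Cn_S n g Cg) as Cg'. destruct Cg as [Dg Cg]; split.
  - intros x; apply ex_derive_comp; auto; apply smooth_ex_derive; auto.
  - apply (Cn_ext n (fun x => Derive s (g x) * Derive g x)).
    + intros x; rewrite (Derive_comp s g); auto; [ring | apply smooth_ex_derive; auto].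
    + apply Cn_mult; auto. apply IH; auto. apply smooth_Derive; auto.
Qed.

Lemma smooth_ext f g : (forall x, f x = g x) -> smooth f -> smooth g.
Proof. intros E Hf n; apply (Cn_ext n f); auto. Qed.

Lemma smooth_plus f g : smooth f -> smooth g -> smooth (fun x => f x + g x).
Proof. intros Hf Hg n; apply Cn_plus; auto. Qed.

Lemma smooth_mult f g : smooth f -> smooth g -> smooth (fun x => f x * g x).
Proof. intros Hf Hg n; apply Cn_mult; auto. Qed.

Lemma smooth_const c : smooth (fun _ => c).
Proof. intros n; apply Cn_const. Qed.

Lemma smooth_id : smooth (fun x => x).
Proof. intros n; apply Cn_id. Qed.

Lemma smooth_comp s g : smooth s -> smooth g -> smooth (fun x => s (g x)).
Proof. intros Hs Hg n; apply Cn_comp; auto. Qed.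

Lemma smooth_opp f : smooth f -> smooth (fun x => - f x).
Proof.
  intros Hf. apply (smooth_ext (fun x => -1 * f x)); [intros; ring|].
  apply smooth_mult; auto using smooth_const.
Qed.

Lemma smooth_minus f g : smooth f -> smooth g -> smooth (fun x => f x - g x).
Proof. intros Hf Hg; apply smooth_plus; auto using smooth_opp. Qed.

Lemma smooth_continuous f x : smooth f -> continuous f x.
Proof.
  intros H; apply (ex_derive_continuous (K := R_AbsRing) (V := R_NormedModule)).
  apply smooth_ex_derive, H.
Qed.

Lemma smooth_continuity_pt f x : smooth f -> continuity_pt f x.
Proof. intros H; apply continuity_pt_filterlim, smooth_continuous, H. Qed.

Lemma smooth_ex_RInt f a b : smooth f -> ex_RInt f a b.
Proof.
  intros H; apply (ex_RInt_continuous (V := R_CompleteNormedModule)).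
  intros; apply smooth_continuous, H.
Qed.

Lemma Derive_n_Sr f n x : Derive_n f (S n) x = Derive_n (Derive f) n x.
Proof. rewrite <- Nat.add_1_r, <- (Derive_n_comp f n 1); reflexivity. Qed.

Lemma smooth_fun_smooth f : smooth_fun f <-> smooth f.
Proof.
  split.
  - intros H n; revert f H; induction n as [|n IH]; simpl; auto.
    intros f H; split; [exact (H 1%nat)|].
    apply IH; intros [|k] x; simpl; auto.
    apply (ex_derive_ext (Derive_n f (S k))); [intros; apply Derive_n_Sr|].
    exact (H (S (S k)) x).
  - intros H [|k] x; simpl; auto.
    revert f H; induction k as [|k IH]; intros f H; [apply smooth_ex_derive, H|].
    apply (ex_derive_ext (Derive_n (Derive f) k)); [intros; symmetry; apply Derive_n_Sr|].
    apply IH, smooth_Derive, H.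
Qed.

Definition madd (A B : M3) : M3 := mmk (fun i j => ent A i j + ent B i j).
Definition mzero : M3 := mmk (fun _ _ => 0).
Definition madj (A : M3) : M3 :=
  mtr (mkM3 (cross (row2 A) (row3 A)) (cross (row3 A) (row1 A)) (cross (row1 A) (row2 A))).

Lemma M3_ext (A B : M3) :
  (forall i j, (i < 3)%nat -> (j < 3)%nat -> ent A i j = ent B i j) -> A = B.
Proof.
  destruct A as [[a1 a2 a3] [a4 a5 a6] [a7 a8 a9]], B as [[b1 b2 b3] [b4 b5 b6] [b7 b8 b9]].
  intros H.
  pose proof (H 0 0)%nat; pose proof (H 0 1)%nat; pose proof (H 0 2)%nat;
  pose proof (H 1 0)%nat; pose proof (H 1 1)%nat; pose proof (H 1 2)%nat;
  pose proof (H 2 0)%nat; pose proof (H 2 1)%nat; pose proof (H 2 2)%nat.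
  cbn in *; f_equal; f_equal; auto with arith.
Qed.

Lemma V3_ext (a b : V3) : (forall i, (i < 3)%nat -> vent a i = vent b i) -> a = b.
Proof.
  destruct a as [a1 a2 a3], b as [b1 b2 b3]; intros H.
  pose proof (H 0)%nat; pose proof (H 1)%nat; pose proof (H 2)%nat.
  cbn in *; f_equal; auto with arith.
Qed.

Ltac ij_cases i j := destruct i as [|[|[|i]]]; destruct j as [|[|[|j]]].

Ltac mext :=
  apply M3_ext; let i := fresh "i" in let j := fresh "j" in
  intros i j ? ?; ij_cases i j; try lia; cbn.

Ltac vext :=
  apply V3_ext; let i := fresh "i" in intros i ?; destruct i as [|[|[|i]]]; try lia; cbn.

Lemma ent_mmul A B i j :
  ent (mmul A B) i j = ent A i 0 * ent B 0 j + ent A i 1 * ent B 1 j + ent A i 2 * ent B 2 j.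
Proof. ij_cases i j; reflexivity. Qed.
Lemma ent_mtr A i j : ent (mtr A) i j = ent A j i.
Proof. ij_cases i j; reflexivity. Qed.
Lemma ent_madd A B i j : ent (madd A B) i j = ent A i j + ent B i j.
Proof. ij_cases i j; reflexivity. Qed.
Lemma ent_mscale c A i j : ent (mscale c A) i j = c * ent A i j.
Proof. ij_cases i j; reflexivity. Qed.
Lemma ent_mzero i j : ent mzero i j = 0.
Proof. ij_cases i j; reflexivity. Qed.
Lemma ent_mderiv L t i j : ent (mderiv L t) i j = Derive (fun s => ent (L s) i j) t.
Proof. ij_cases i j; reflexivity. Qed.
Lemma vent_mapp A v i :
  vent (mapp A v) i = ent A i 0 * vent v 0 + ent A i 1 * vent v 1 + ent A i 2 * vent v 2.
Proof. destruct i as [|[|[|i]]]; reflexivity. Qed.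
Lemma vent_vderiv v t i : vent (vderiv v t) i = Derive (fun s => vent (v s) i) t.
Proof. destruct i as [|[|[|i]]]; reflexivity. Qed.
Lemma dot_vent a b : dot a b = vent a 0 * vent b 0 + vent a 1 * vent b 1 + vent a 2 * vent b 2.
Proof. reflexivity. Qed.
Lemma vent_vee A i :
  vent (vee A) i = match i with 0%nat => ent A 2 1 | 1%nat => ent A 0 2 | _ => ent A 1 0 end.
Proof. destruct i as [|[|[|i]]]; reflexivity. Qed.
Lemma vent_vsub a b i : vent (vsub a b) i = vent a i - vent b i.
Proof. destruct i as [|[|[|i]]]; reflexivity. Qed.
Lemma vent_vscale c a i : vent (vscale c a) i = c * vent a i.
Proof. destruct i as [|[|[|i]]]; reflexivity. Qed.
Lemma ent_hat v i j :
  ent (hat v) i j =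
  match i, j with
  | 0%nat, 0%nat => 0 | 0%nat, 1%nat => - vent v 2 | 0%nat, _ => vent v 1
  | 1%nat, 0%nat => vent v 2 | 1%nat, 1%nat => 0 | 1%nat, _ => - vent v 0
  | _, 0%nat => - vent v 1 | _, 1%nat => vent v 0 | _, _ => 0
  end.
Proof. ij_cases i j; reflexivity. Qed.

Ltac dM A := destruct A as [[?a ?a ?a] [?a ?a ?a] [?a ?a ?a]].

Lemma mmul_assoc A B C : mmul A (mmul B C) = mmul (mmul A B) C.
Proof. mext; ring. Qed.
Lemma mmul_mI_r A : mmul A mI = A.
Proof. dM A; mext; ring. Qed.
Lemma mmul_mI_l A : mmul mI A = A.
Proof. dM A; mext; ring. Qed.
Lemma mmul_mscale_r c A B : mmul A (mscale c B) = mscale c (mmul A B).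
Proof. mext; ring. Qed.
Lemma mscale_mscale c d A : mscale c (mscale d A) = mscale (c * d) A.
Proof. mext; ring. Qed.
Lemma mscale_1 A : mscale 1 A = A.
Proof. dM A; mext; ring. Qed.
Lemma mapp_mmul A B x : mapp (mmul A B) x = mapp A (mapp B x).
Proof. dM A; dM B; destruct x; unfold mapp, dot; simpl; f_equal; ring. Qed.
Lemma mapp_mI x : mapp mI x = x.
Proof. destruct x; vext; unfold dot; cbn; ring. Qed.

Lemma dot_comm x y : dot x y = dot y x.
Proof. unfold dot; ring. Qed.
Lemma dot_vscale_l c x y : dot (vscale c x) y = c * dot x y.
Proof. unfold dot; simpl; ring. Qed.
Lemma dot_vscale_r c x y : dot x (vscale c y) = c * dot x y.
Proof. unfold dot; simpl; ring. Qed.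
Lemma dot_mapp_mtr A x y : dot (mapp (mtr A) x) y = dot x (mapp A y).
Proof. destruct x, y; dM A; unfold mapp, dot; simpl; ring. Qed.
Lemma dot_mapp_l A x y : dot (mapp A x) y = dot x (mapp (mtr A) y).
Proof. destruct x, y; dM A; unfold mapp, dot; simpl; ring. Qed.
Lemma dot_mapp_orth A u v : mmul (mtr A) A = mI -> dot (mapp A u) (mapp A v) = dot u v.
Proof. intros HA; rewrite dot_mapp_l, <- mapp_mmul, HA, mapp_mI; reflexivity. Qed.
Lemma dot_mapp_sym J x y : mtr J = J -> dot x (mapp J y) = dot y (mapp J x).
Proof.
  intros HJ; rewrite <- HJ at 1; rewrite <- dot_mapp_mtr; apply dot_comm.
Qed.
Lemma dot_self_eq0 g : dot g g = 0 -> g = vzero.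
Proof. destruct g as [a b c]; unfold dot; simpl; intros H; unfold vzero; f_equal; nra. Qed.
Lemma vadd_vscale0 c x : vadd c (vscale 0 x) = c.
Proof. destruct c, x; unfold vadd, vscale; simpl; f_equal; ring. Qed.

Lemma hat_cube u : mmul (hat u) (mmul (hat u) (hat u)) = mscale (- dot u u) (hat u).
Proof. destruct u; mext; unfold dot; simpl; ring. Qed.
Lemma hat_vscale x v : hat (vscale x v) = mscale x (hat v).
Proof. destruct v; mext; ring. Qed.
Lemma hat_vee_skew S : madd S (mtr S) = mzero -> hat (vee S) = S.
Proof.
  dM S; unfold madd, mtr, mzero, mmk; simpl; intros H; injection H; intros.
  mext; lra.
Qed.

Lemma mmul_madj A : mmul A (madj A) = mscale (mdet A) mI.
Proof. dM A; mext; unfold mdet, dot, cross; simpl; ring. Qed.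
Lemma vee_conj A a : vee (mmul (mtr A) (mmul (hat a) A)) = mapp (madj A) a.
Proof. dM A; destruct a; unfold vee, madj, mapp, dot, cross; simpl; f_equal; ring. Qed.

Lemma SO3_madj A : in_SO3 A -> madj A = mtr A.
Proof.
  intros [HO Hdet].
  transitivity (mmul (mmul (mtr A) A) (madj A)); [rewrite HO, mmul_mI_l; reflexivity|].
  rewrite <- mmul_assoc, mmul_madj, Hdet, mscale_1; apply mmul_mI_r.
Qed.
Lemma SO3_mmul_mtr A : in_SO3 A -> mmul A (mtr A) = mI.
Proof. intros HA; rewrite <- (SO3_madj A HA), mmul_madj, (proj2 HA); apply mscale_1. Qed.

Definition smoothM (F : R -> M3) : Prop := forall i j, smooth (fun t => ent (F t) i j).
Definition smoothV (F : R -> V3) : Prop := forall i, smooth (fun t => vent (F t) i).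

Ltac smooth_tac :=
  repeat (first [ apply smooth_plus | apply smooth_mult | apply smooth_minus | apply smooth_opp
                | apply smooth_const | apply smooth_id | assumption ]).

Lemma smoothM_mmul A B : smoothM A -> smoothM B -> smoothM (fun t => mmul (A t) (B t)).
Proof.
  intros HA HB i j; apply (smooth_ext _ _ (fun t => eq_sym (ent_mmul _ _ i j))); smooth_tac; auto.
Qed.
Lemma smoothM_mtr A : smoothM A -> smoothM (fun t => mtr (A t)).
Proof. intros HA i j; apply (smooth_ext _ _ (fun t => eq_sym (ent_mtr _ i j))); auto. Qed.
Lemma smoothM_const A : smoothM (fun _ => A).
Proof. intros i j; apply smooth_const. Qed.
Lemma smoothM_mderiv A : smoothM A -> smoothM (mderiv A).
Proof.
  intros HA i j; apply (smooth_ext _ _ (fun t => eq_sym (ent_mderiv _ t i j))).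
  apply smooth_Derive, HA.
Qed.
Lemma smoothV_vderiv v : smoothV v -> smoothV (vderiv v).
Proof.
  intros Hv i; apply (smooth_ext _ _ (fun t => eq_sym (vent_vderiv _ t i))).
  apply smooth_Derive, Hv.
Qed.
Lemma smoothV_mapp A v : smoothM A -> smoothV v -> smoothV (fun t => mapp (A t) (v t)).
Proof.
  intros HA Hv i; apply (smooth_ext _ _ (fun t => eq_sym (vent_mapp _ _ i))); smooth_tac; auto.
Qed.
Lemma smoothV_vee A : smoothM A -> smoothV (fun t => vee (A t)).
Proof.
  intros HA i; apply (smooth_ext _ _ (fun t => eq_sym (vent_vee _ i))).
  destruct i as [|[|[|i]]]; auto.
Qed.
Lemma smooth_dot a b : smoothV a -> smoothV b -> smooth (fun t => dot (a t) (b t)).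
Proof. intros Ha Hb; apply (smooth_ext _ _ (fun t => eq_sym (dot_vent _ _))); smooth_tac; auto. Qed.
Lemma smoothV_vsub a b : smoothV a -> smoothV b -> smoothV (fun t => vsub (a t) (b t)).
Proof.
  intros Ha Hb i; apply (smooth_ext _ _ (fun t => eq_sym (vent_vsub _ _ i))); smooth_tac; auto.
Qed.
Lemma smoothV_vscale c a : smooth c -> smoothV a -> smoothV (fun t => vscale (c t) (a t)).
Proof.
  intros Hc Ha i; apply (smooth_ext _ _ (fun t => eq_sym (vent_vscale _ _ i))); smooth_tac; auto.
Qed.
Lemma smoothV_const a : smoothV (fun _ => a).
Proof. intros i; apply smooth_const. Qed.
Lemma smoothM_hat v : smoothV v -> smoothM (fun t => hat (v t)).
Proof.
  intros Hv i j; apply (smooth_ext _ _ (fun t => eq_sym (ent_hat _ i j))).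
  ij_cases i j; smooth_tac; auto.
Qed.

Lemma smooth_M_smoothM L : smooth_M L -> smoothM L.
Proof.
  intros H i j.
  apply (smooth_ext (fun t => ent (L t) (Nat.min i 2) (Nat.min j 2))); [intros; ij_cases i j; reflexivity|].
  apply smooth_fun_smooth, H; lia.
Qed.
Lemma smooth_V_smoothV v : smooth_V v <-> smoothV v.
Proof.
  split; intros H i.
  - apply (smooth_ext (fun t => vent (v t) (Nat.min i 2))); [intros; destruct i as [|[|[|i]]]; reflexivity|].
    apply smooth_fun_smooth, H; lia.
  - intros _; apply smooth_fun_smooth, H.
Qed.

Lemma Derive_sum3_mult (f1 f2 f3 g1 g2 g3 : R -> R) (t : R) :
  ex_derive f1 t -> ex_derive f2 t -> ex_derive f3 t ->
  ex_derive g1 t -> ex_derive g2 t -> ex_derive g3 t ->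
  Derive (fun s => f1 s * g1 s + f2 s * g2 s + f3 s * g3 s) t =
  Derive f1 t * g1 t + f1 t * Derive g1 t + (Derive f2 t * g2 t + f2 t * Derive g2 t)
  + (Derive f3 t * g3 t + f3 t * Derive g3 t).
Proof.
  intros.
  rewrite (Derive_plus (fun s => f1 s * g1 s + f2 s * g2 s) (fun s => f3 s * g3 s)),
    (Derive_plus (fun s => f1 s * g1 s) (fun s => f2 s * g2 s)),
    (Derive_mult f1 g1), (Derive_mult f2 g2), (Derive_mult f3 g3); auto;
    try apply (ex_derive_plus (fun s => f1 s * g1 s) (fun s => f2 s * g2 s));
    apply ex_derive_mult; auto.
Qed.

Lemma mderiv_mmul A B t : smoothM A -> smoothM B ->
  mderiv (fun s => mmul (A s) (B s)) t = madd (mmul (mderiv A t) (B t)) (mmul (A t) (mderiv B t)).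
Proof.
  intros HA HB; apply M3_ext; intros i j _ _.
  rewrite ent_mderiv, ent_madd, !ent_mmul, !ent_mderiv.
  rewrite (Derive_ext _ _ _ (fun s => ent_mmul (A s) (B s) i j)).
  rewrite Derive_sum3_mult by (apply smooth_ex_derive; auto); ring.
Qed.

Lemma mderiv_mtr L t : mderiv (fun s => mtr (L s)) t = mtr (mderiv L t).
Proof. mext; reflexivity. Qed.

Lemma mderiv_hat v t : mderiv (fun s => hat (v s)) t = hat (vderiv v t).
Proof. mext; first [apply Derive_const | apply Derive_opp | reflexivity]. Qed.

Section Interval.
Variables (a b : R).
Hypothesis Hab : a < b.

Lemma interior_point_near t0 d : a <= t0 <= b -> 0 < d ->
  exists s, a < s < b /\ Rabs (s - t0) < d /\ s <> t0.
Proof.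
  intros Ht Hd.
  pose proof (Rmin_l d ((b - a) / 2)); pose proof (Rmin_r d ((b - a) / 2)).
  assert (0 < Rmin d ((b - a) / 2)) by (apply Rmin_pos; lra).
  set (m := Rmin d ((b - a) / 2)) in *.
  destruct (Rle_dec t0 ((a + b) / 2)).
  - exists (t0 + m / 2); split; [lra | split; [|lra]].
    rewrite Rabs_pos_eq; lra.
  - exists (t0 - m / 2); split; [lra | split; [|lra]].
    rewrite Rabs_left; lra.
Qed.

Lemma Derive_const_on f t0 : a <= t0 <= b -> ex_derive f t0 ->
  (forall s, a <= s <= b -> f s = f t0) -> Derive f t0 = 0.
Proof.
  intros Ht Hd Hc; pose proof (Derive_correct _ _ Hd) as D; apply is_derive_Reals in D.
  set (l := Derive f t0) in *; destruct (Req_dec l 0) as [E|E]; auto; exfalso.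
  assert (Hl : 0 < Rabs l) by (apply Rabs_pos_lt; auto).
  destruct (D (Rabs l) Hl) as [d Hd'].
  destruct (interior_point_near t0 d Ht (cond_pos d)) as [s [Hs1 [Hs2 Hs3]]].
  specialize (Hd' (s - t0) ltac:(lra) Hs2); replace (t0 + (s - t0)) with s in Hd' by ring.
  rewrite Hc in Hd' by lra; replace ((f t0 - f t0) / (s - t0) - l) with (- l) in Hd' by (field; lra).
  rewrite Rabs_Ropp in Hd'; lra.
Qed.

Lemma Derive_eq_on f g t0 : a <= t0 <= b -> ex_derive f t0 -> ex_derive g t0 ->
  (forall s, a <= s <= b -> f s = g s) -> Derive f t0 = Derive g t0.
Proof.
  intros Ht Hf Hg H.
  assert (E : Derive (fun s => f s - g s) t0 = 0).
  { apply Derive_const_on; auto; [apply (ex_derive_minus f g); auto|].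
    intros s Hs; toR; rewrite !H by auto; ring. }
  rewrite (Derive_minus f g) in E by auto; toR; lra.
Qed.

Lemma continuity_pt_eq0_interior f t0 : a <= t0 <= b -> continuity_pt f t0 ->
  (forall s, a < s < b -> f s = 0) -> f t0 = 0.
Proof.
  intros Ht Hc H; destruct (Req_dec (f t0) 0) as [E|E]; auto; exfalso.
  assert (Hl : 0 < Rabs (f t0)) by (apply Rabs_pos_lt; auto).
  destruct (Hc (Rabs (f t0)) Hl) as [d [Hd Hd']].
  destruct (interior_point_near t0 d Ht Hd) as [s [Hs1 [Hs2 Hs3]]].
  specialize (Hd' s); simpl in Hd'; unfold R_dist in Hd'.
  rewrite H, Rminus_0_l, Rabs_Ropp in Hd' by auto.
  assert (Rabs (f t0) < Rabs (f t0)) by (apply Hd'; split; [split; [exact I | auto] | auto]); lra.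
Qed.

Lemma RInt_nonneg_eq0 h : (forall t, continuous h t) -> (forall t, a <= t <= b -> 0 <= h t) ->
  RInt h a b = 0 -> forall t, a < t < b -> h t = 0.
Proof.
  intros Hc Hp HI t0 Ht0; destruct (Req_dec (h t0) 0) as [E|E]; auto; exfalso.
  assert (Hpos : 0 < h t0) by (pose proof (Hp t0 ltac:(lra)); lra).
  assert (Ih : forall u v, ex_RInt h u v)
    by (intros; apply (ex_RInt_continuous (V := R_CompleteNormedModule)); auto).
  destruct (proj2 (continuity_pt_filterlim h t0) (Hc t0) (h t0 / 2) ltac:(lra)) as [d [Hd Hd']].
  pose proof (Rmax_l a (t0 - d / 2)); pose proof (Rmax_r a (t0 - d / 2)).
  pose proof (Rmin_l b (t0 + d / 2)); pose proof (Rmin_r b (t0 + d / 2)).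
  assert (Rmax a (t0 - d / 2) < t0) by (apply Rmax_lub_lt; lra).
  assert (t0 < Rmin b (t0 + d / 2)) by (apply Rmin_glb_lt; lra).
  set (u := Rmax a (t0 - d / 2)) in *; set (v := Rmin b (t0 + d / 2)) in *.
  rewrite <- (RInt_Chasles h a u b), <- (RInt_Chasles h u v b) in HI; auto.
  change plus with Rplus in HI.
  assert (0 <= RInt h a u) by (apply RInt_ge_0; [lra | auto | intros; apply Hp; lra]).
  assert (0 <= RInt h v b) by (apply RInt_ge_0; [lra | auto | intros; apply Hp; lra]).
  assert (Hm : RInt (fun _ => h t0 / 2) u v <= RInt h u v).
  { apply RInt_le; [lra | apply ex_RInt_const | auto |]; intros x Hx.
    destruct (Req_dec x t0) as [->|Ex]; [lra|].
    assert (Hx' : Rabs (h x - h t0) < h t0 / 2).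
    { apply Hd'; split; [split; [exact I | auto] | simpl; unfold R_dist; apply Rabs_def1; lra]. }
    apply Rabs_def2 in Hx'; lra. }
  rewrite RInt_const in Hm; change (scal (v - u) (h t0 / 2)) with ((v - u) * (h t0 / 2)) in Hm.
  assert (0 < (v - u) * (h t0 / 2)) by (apply Rmult_lt_0_compat; lra); lra.
Qed.

Lemma smoothV_eq0_of_RInt g : smoothV g ->
  RInt (fun t => (t - a) * (b - t) * dot (g t) (g t)) a b = 0 -> forall t, a <= t <= b -> g t = vzero.
Proof.
  intros Hg HI.
  assert (Hgg : smooth (fun t => dot (g t) (g t))) by (apply smooth_dot; auto).
  assert (Hin : forall t, a < t < b -> g t = vzero).
  { intros t Ht; apply dot_self_eq0.
    assert (E : (t - a) * (b - t) * dot (g t) (g t) = 0).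
    { apply (RInt_nonneg_eq0 (fun t => (t - a) * (b - t) * dot (g t) (g t))); auto.
      - intros u; apply smooth_continuous, smooth_mult; auto.
        apply smooth_mult; apply smooth_minus; auto using smooth_id, smooth_const.
      - intros u Hu; apply Rmult_le_pos; [nra | destruct (g u); unfold dot; simpl; nra]. }
    apply Rmult_integral in E; destruct E as [E|E]; auto; nra. }
  intros t Ht; apply V3_ext; intros i _.
  replace (vent vzero i) with 0 by (destruct i as [|[|[|i]]]; reflexivity).
  apply (continuity_pt_eq0_interior (fun s => vent (g s) i)); auto using smooth_continuity_pt.
  intros s Hs; rewrite Hin by auto; destruct i as [|[|[|i]]]; reflexivity.
Qed.
End Interval.

Lemma cont_on_continuous a b f : (forall t, continuity_pt f t) -> cont_on a b f.
Proof.
  intros Hf t _ eps Heps; destruct (Hf t eps Heps) as [d [Hd Hd']].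
  exists d; split; auto; intros s _ Hst.
  destruct (Req_dec s t) as [->|E]; [rewrite Rminus_diag, Rabs_R0; auto|].
  apply Hd'; split; [split; [exact I | auto] | auto].
Qed.

Lemma RInt_dot_by_parts a b P v : smoothV P -> smoothV v -> v a = vzero -> v b = vzero ->
  RInt (fun t => dot (P t) (vderiv v t)) a b = - RInt (fun t => dot (vderiv P t) (v t)) a b.
Proof.
  intros HP Hv Ha Hb; set (f := fun t => dot (P t) (v t)).
  assert (Sf : smooth f) by (apply smooth_dot; auto).
  assert (E : RInt (Derive f) a b = f b - f a).
  { apply RInt_Derive; intros; [apply smooth_ex_derive, Sf | apply smooth_continuous, smooth_Derive, Sf]. }
  assert (Z : f b - f a = 0) by (unfold f; rewrite Ha, Hb; unfold dot; simpl; ring).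
  rewrite Z, (RInt_ext _ (fun t => dot (vderiv P t) (v t) + dot (P t) (vderiv v t))) in E.
  2:{ intros t _; unfold f; rewrite (Derive_ext _ _ _ (fun t => dot_vent (P t) (v t))).
      rewrite Derive_sum3_mult, !dot_vent, !vent_vderiv by (apply smooth_ex_derive; auto); toR; ring. }
  rewrite (RInt_plus (fun t => dot (vderiv P t) (v t)) (fun t => dot (P t) (vderiv v t))) in E;
    [change plus with Rplus in E; lra|..];
    apply smooth_ex_RInt, smooth_dot; auto using smoothV_vderiv.
Qed.

(** * Rodrigues' formula *)

Definition rodrigues_coef (k m : nat) : R := (-1) ^ m / INR (Factorial.fact (2 * m + k)).

(* [rodrigues_s (a^2) = sin a / a] and [rodrigues_c (a^2) = (1 - cos a) / a^2]. *)
Definition rodrigues_s : R -> R := PSeries (rodrigues_coef 1).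
Definition rodrigues_c : R -> R := PSeries (rodrigues_coef 2).

Lemma CV_radius_rodrigues_coef k : CV_radius (rodrigues_coef k) = p_infty.
Proof.
  apply CV_radius_infinite_DAlembert.
  - intros n; apply Rmult_integral_contrapositive_currified; [apply pow_nonzero; lra|].
    apply Rinv_neq_0_compat, not_0_INR, Factorial.fact_neq_0.
  - apply is_lim_seq_le_le with (fun _ => 0) (fun n => / INR (S n)).
    + intros n; unfold rodrigues_coef.
      replace (2 * S n + k)%nat with (S (S (2 * n + k))) by lia.
      set (F := Factorial.fact (2 * n + k)).
      change (Factorial.fact (S (S (2 * n + k)))) with (S (S (2 * n + k)) * (S (2 * n + k) * F))%nat.
      rewrite !mult_INR.
      assert (0 < INR F) by apply lt_0_INR, Factorial.lt_O_fact.
      assert (INR (S n) <= INR (S (S (2 * n + k)))) by (apply le_INR; lia).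
      assert (1 <= INR (S (2 * n + k))) by (apply (le_INR 1); lia).
      assert (0 < INR (S n)) by (apply lt_0_INR; lia).
      replace ((-1) ^ S n / (INR (S (S (2 * n + k))) * (INR (S (2 * n + k)) * INR F)) / ((-1) ^ n / INR F))
        with (- / (INR (S (S (2 * n + k))) * INR (S (2 * n + k))))
        by (simpl pow; field; repeat split; try lra; apply pow_nonzero; lra).
      rewrite Rabs_Ropp, Rabs_right by (apply Rle_ge, Rlt_le, Rinv_0_lt_compat; nra).
      split; [apply Rlt_le, Rinv_0_lt_compat; nra | apply Rinv_le_contravar; nra].
    + apply is_lim_seq_const.
    + apply (is_lim_seq_incr_1 (fun n => / INR n)).
      replace (Finite 0) with (Rbar_inv p_infty) by reflexivity.
      apply is_lim_seq_inv; [apply is_lim_seq_INR | discriminate].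
Qed.

Lemma smooth_PSeries a : CV_radius a = p_infty -> smooth (PSeries a).
Proof.
  intros Ha n; revert a Ha; induction n as [|n IH]; simpl; auto; intros a Ha; split.
  - intros x; apply ex_derive_PSeries; rewrite Ha; simpl; auto.
  - apply (Cn_ext n (PSeries (PS_derive a))).
    + intros x; symmetry; apply Derive_PSeries; rewrite Ha; simpl; auto.
    + apply IH; rewrite CV_radius_derive; auto.
Qed.

Lemma smooth_rodrigues_s : smooth rodrigues_s.
Proof. apply smooth_PSeries, CV_radius_rodrigues_coef. Qed.
Lemma smooth_rodrigues_c : smooth rodrigues_c.
Proof. apply smooth_PSeries, CV_radius_rodrigues_coef. Qed.

Lemma rodrigues_s0 : rodrigues_s 0 = 1.
Proof. unfold rodrigues_s; rewrite PSeries_0; unfold rodrigues_coef; simpl; field. Qed.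

Lemma is_series_rodrigues_coef k q :
  is_series (fun m => rodrigues_coef k m * q ^ m) (PSeries (rodrigues_coef k) q).
Proof.
  apply is_pseries_R, PSeries_correct, CV_radius_inside.
  rewrite CV_radius_rodrigues_coef; exact I.
Qed.

Lemma is_series_even_odd (a : nat -> R) (l1 l2 : R) :
  is_series (fun n => a (2 * n)%nat) l1 -> is_series (fun n => a (2 * n + 1)%nat) l2 ->
  is_series a (l1 + l2).
Proof.
  intros He Ho.
  assert (E : forall (b : nat -> R) (l : R), is_series b l <-> is_pseries b 1 l).
  { intros b l; rewrite is_pseries_R; split; apply is_series_ext; intros n;
    rewrite pow1, Rmult_1_r; reflexivity. }
  rewrite E, <- (Rmult_1_l l2); apply is_pseries_odd_even; rewrite pow1, <- E; auto.
Qed.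

Lemma mpow_hat_odd u m :
  mpow (hat u) (2 * m + 1) = mscale ((-1) ^ m * dot u u ^ m) (hat u).
Proof.
  induction m as [|m IH]; [simpl; rewrite mmul_mI_r, Rmult_1_l, mscale_1; reflexivity|].
  replace (2 * S m + 1)%nat with (S (S (2 * m + 1))) by lia.
  change (mmul (hat u) (mmul (hat u) (mpow (hat u) (2 * m + 1))) =
          mscale ((-1) ^ S m * dot u u ^ S m) (hat u)).
  rewrite IH, !mmul_mscale_r, hat_cube, mscale_mscale; f_equal; simpl; ring.
Qed.

Lemma mpow_hat_even u m :
  mpow (hat u) (2 * m + 2) = mscale ((-1) ^ m * dot u u ^ m) (mmul (hat u) (hat u)).
Proof.
  replace (2 * m + 2)%nat with (S (2 * m + 1)) by lia.
  change (mpow (hat u) (S (2 * m + 1))) with (mmul (hat u) (mpow (hat u) (2 * m + 1))).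
  rewrite mpow_hat_odd, mmul_mscale_r; reflexivity.
Qed.

Lemma rodrigues u i j :
  ent (mexp (hat u)) i j =
  ent mI i j + rodrigues_s (dot u u) * ent (hat u) i j
  + rodrigues_c (dot u u) * ent (mmul (hat u) (hat u)) i j.
Proof.
  assert (Hfact : forall n, INR (Factorial.fact n) <> 0)
    by (intros; apply not_0_INR, Factorial.fact_neq_0).
  set (a := fun k => ent (mpow (hat u) k) i j / INR (Factorial.fact k)).
  replace (ent (mexp (hat u)) i j) with (Series a) by (ij_cases i j; reflexivity).
  apply is_series_unique; rewrite Rplus_assoc, (Rplus_comm (_ * _)), <- Rplus_assoc.
  apply is_series_even_odd.
  - apply is_series_decr_1.
    replace (plus _ (opp (a (2 * 0)%nat))) with (rodrigues_c (dot u u) * ent (mmul (hat u) (hat u)) i j)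
      by (unfold a; simpl; change plus with Rplus; change opp with Ropp; field).
    apply (is_series_ext (fun m => rodrigues_coef 2 m * dot u u ^ m * ent (mmul (hat u) (hat u)) i j)).
    + intros m; unfold a, rodrigues_coef.
      replace (2 * S m)%nat with (2 * m + 2)%nat by lia.
      rewrite mpow_hat_even, ent_mscale; toR; field; auto.
    + apply is_series_scal_r, is_series_rodrigues_coef.
  - apply (is_series_ext (fun m => rodrigues_coef 1 m * dot u u ^ m * ent (hat u) i j)).
    + intros m; unfold a, rodrigues_coef; rewrite mpow_hat_odd, ent_mscale; toR; field; auto.
    + apply is_series_scal_r, is_series_rodrigues_coef.
Qed.

(** * Uniform first-order expansions *)

Definition bounded_on (a b : R) (f : R -> R) : Prop :=
  exists M, 0 <= M /\ forall t, a <= t <= b -> Rabs (f t) <= M.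

Lemma bounded_on_continuous a b f :
  (forall t, a <= t <= b -> continuity_pt f t) -> bounded_on a b f.
Proof.
  intros Hf; destruct (Rle_dec a b) as [Hab|Hab].
  - destruct (continuity_ab_maj (fun t => Rabs (f t)) a b Hab) as [M [HM _]].
    + intros t Ht; apply continuity_pt_comp with (f1 := f) (f2 := Rabs); auto.
      apply Rcontinuity_abs.
    + exists (Rabs (f M)); split; [apply Rabs_pos | auto].
  - exists 0; split; [lra | intros t Ht; lra].
Qed.

Lemma bounded_on_smooth a b f : smooth f -> bounded_on a b f.
Proof. intros Hf; apply bounded_on_continuous; intros; apply smooth_continuity_pt, Hf. Qed.

Lemma Rabs_mult_le x y X Y : Rabs x <= X -> Rabs y <= Y -> Rabs (x * y) <= X * Y.
Proof. intros; rewrite Rabs_mult; apply Rmult_le_compat; auto; apply Rabs_pos. Qed.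

Lemma Rabs_scal_le x y Y : Rabs x <= 1 -> Rabs y <= Y -> Rabs (x * y) <= Y.
Proof. intros Hx Hy; rewrite <- (Rmult_1_l Y); apply Rabs_mult_le; auto. Qed.

Lemma sqr_le_1 x : Rabs x <= 1 -> 0 <= x * x <= 1.
Proof. intros Hx; apply Rabs_le_between in Hx; split; nra. Qed.

Definition unif_expansion (T : R) (F : R -> R -> R) (a b : R -> R) : Prop :=
  bounded_on 0 T a /\ bounded_on 0 T b /\
  exists C, 0 <= C /\ forall x t, 0 <= t <= T -> Rabs x <= 1 ->
    Rabs (F x t - a t - x * b t) <= C * (x * x).

Section UnifExpansion.
Variable T : R.

Lemma unif_expansion_ext F a b F' a' b' : unif_expansion T F a b ->
  (forall x t, 0 <= t <= T -> Rabs x <= 1 -> F x t = F' x t) ->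
  (forall t, 0 <= t <= T -> a t = a' t) -> (forall t, 0 <= t <= T -> b t = b' t) ->
  unif_expansion T F' a' b'.
Proof.
  intros [[Ma [HMa Ha]] [[Mb [HMb Hb]] [C [HC H]]]] EF Ea Eb; split; [|split].
  - exists Ma; split; auto; intros t Ht; rewrite <- Ea; auto.
  - exists Mb; split; auto; intros t Ht; rewrite <- Eb; auto.
  - exists C; split; auto; intros x t Ht Hx; rewrite <- EF, <- Ea, <- Eb; auto.
Qed.

Lemma unif_expansion_bounded F a b : unif_expansion T F a b ->
  exists B, 0 <= B /\ forall x t, 0 <= t <= T -> Rabs x <= 1 -> Rabs (F x t) <= B.
Proof.
  intros [[Ma [HMa Ha]] [[Mb [HMb Hb]] [C [HC H]]]].
  exists (C + Ma + Mb); split; [lra|]; intros x t Ht Hx.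
  pose proof (sqr_le_1 x Hx); pose proof (Rabs_scal_le x (b t) Mb Hx (Hb t Ht)).
  replace (F x t) with ((F x t - a t - x * b t) + a t + x * b t) by ring.
  pose proof (H x t Ht Hx); pose proof (Ha t Ht).
  pose proof (Rabs_triang (F x t - a t - x * b t + a t) (x * b t)).
  pose proof (Rabs_triang (F x t - a t - x * b t) (a t)).
  nra.
Qed.

Lemma unif_expansion_plus F G a b c d : unif_expansion T F a b -> unif_expansion T G c d ->
  unif_expansion T (fun x t => F x t + G x t) (fun t => a t + c t) (fun t => b t + d t).
Proof.
  intros [[Ma [HMa Ha]] [[Mb [HMb Hb]] [C [HC H]]]] [[Mc [HMc Hc]] [[Md [HMd Hd]] [C' [HC' H']]]].
  split; [|split].
  - exists (Ma + Mc); split; [lra|]; intros t Ht.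
    pose proof (Rabs_triang (a t) (c t)); pose proof (Ha t Ht); pose proof (Hc t Ht); lra.
  - exists (Mb + Md); split; [lra|]; intros t Ht.
    pose proof (Rabs_triang (b t) (d t)); pose proof (Hb t Ht); pose proof (Hd t Ht); lra.
  - exists (C + C'); split; [lra|]; intros x t Ht Hx.
    replace (F x t + G x t - (a t + c t) - x * (b t + d t))
      with ((F x t - a t - x * b t) + (G x t - c t - x * d t)) by ring.
    pose proof (Rabs_triang (F x t - a t - x * b t) (G x t - c t - x * d t)).
    pose proof (H x t Ht Hx); pose proof (H' x t Ht Hx); nra.
Qed.

Lemma unif_expansion_mult F G a b c d : unif_expansion T F a b -> unif_expansion T G c d ->
  unif_expansion T (fun x t => F x t * G x t) (fun t => a t * c t) (fun t => a t * d t + b t * c t).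
Proof.
  intros EF EG.
  destruct (unif_expansion_bounded F a b EF) as [B [HB HF]].
  destruct EF as [[Ma [HMa Ha]] [[Mb [HMb Hb]] [C [HC H]]]].
  destruct EG as [[Mc [HMc Hc]] [[Md [HMd Hd]] [C' [HC' H']]]].
  split; [|split].
  - exists (Ma * Mc); split; [nra|]; intros t Ht; apply Rabs_mult_le; auto.
  - exists (Ma * Md + Mb * Mc); split; [nra|]; intros t Ht.
    eapply Rle_trans; [apply Rabs_triang|]; apply Rplus_le_compat; apply Rabs_mult_le; auto.
  - exists (B * C' + C * (Mc + Md) + Mb * Md); split; [nra|]; intros x t Ht Hx.
    replace (F x t * G x t - a t * c t - x * (a t * d t + b t * c t))
      with (F x t * (G x t - c t - x * d t) + (F x t - a t - x * b t) * (c t + x * d t)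
            + x * x * (b t * d t)) by ring.
    assert (Hcd : Rabs (c t + x * d t) <= Mc + Md).
    { pose proof (Rabs_triang (c t) (x * d t)); pose proof (Hc t Ht).
      pose proof (Rabs_scal_le x (d t) Md Hx (Hd t Ht)); lra. }
    pose proof (Rabs_mult_le _ _ _ _ (HF x t Ht Hx) (H' x t Ht Hx)).
    pose proof (Rabs_mult_le _ _ _ _ (H x t Ht Hx) Hcd).
    assert (Rabs (x * x * (b t * d t)) <= x * x * (Mb * Md)).
    { rewrite Rabs_mult, (Rabs_pos_eq (x * x)) by nra.
      apply Rmult_le_compat_l; [nra | apply Rabs_mult_le; auto]. }
    pose proof (Rabs_triang (F x t * (G x t - c t - x * d t) + (F x t - a t - x * b t) * (c t + x * d t))
                  (x * x * (b t * d t))).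
    pose proof (Rabs_triang (F x t * (G x t - c t - x * d t)) ((F x t - a t - x * b t) * (c t + x * d t))).
    nra.
Qed.

Lemma unif_expansion_const g : bounded_on 0 T g -> unif_expansion T (fun _ t => g t) g (fun _ => 0).
Proof.
  intros Hg; split; [auto | split].
  - exists 0; split; [lra | intros; rewrite Rabs_R0; lra].
  - exists 0; split; [lra|]; intros.
    replace (g t - g t - x * 0) with 0 by ring; rewrite Rabs_R0; lra.
Qed.

Lemma unif_expansion_id : unif_expansion T (fun x _ => x) (fun _ => 0) (fun _ => 1).
Proof.
  split; [|split].
  - exists 0; split; [lra | intros; rewrite Rabs_R0; lra].
  - exists 1; split; [lra | intros; rewrite Rabs_R1; lra].
  - exists 0; split; [lra|]; intros.
    replace (x - 0 - x * 1) with 0 by ring; rewrite Rabs_R0; lra.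
Qed.

Lemma unif_expansion_linear g : bounded_on 0 T g ->
  unif_expansion T (fun x t => x * g t) (fun _ => 0) g.
Proof.
  intros Hg; eapply unif_expansion_ext;
    [apply unif_expansion_mult; [apply unif_expansion_id | apply (unif_expansion_const g Hg)]|..];
    intros; simpl; ring.
Qed.

Lemma unif_expansion_quadratic g : bounded_on 0 T g ->
  unif_expansion T (fun x t => x * x * g t) (fun _ => 0) (fun _ => 0).
Proof.
  intros Hg; eapply unif_expansion_ext;
    [apply unif_expansion_mult; [apply unif_expansion_id | apply (unif_expansion_linear g Hg)]|..];
    intros; simpl; ring.
Qed.

Lemma unif_expansion_mult_null F G a b : unif_expansion T F (fun _ => 0) (fun _ => 0) ->
  unif_expansion T G a b -> unif_expansion T (fun x t => F x t * G x t) (fun _ => 0) (fun _ => 0).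
Proof.
  intros HF HG; eapply unif_expansion_ext; [apply (unif_expansion_mult _ _ _ _ _ _ HF HG)|..];
    intros; simpl; ring.
Qed.

Lemma unif_expansion_mult_null_r F G a b : unif_expansion T F a b ->
  unif_expansion T G (fun _ => 0) (fun _ => 0) ->
  unif_expansion T (fun x t => F x t * G x t) (fun _ => 0) (fun _ => 0).
Proof.
  intros HF HG; eapply unif_expansion_ext; [apply (unif_expansion_mult _ _ _ _ _ _ HF HG)|..];
    intros; simpl; ring.
Qed.

(* Mean value theorem: [|s y - s 0| <= sup |s'| * |y|] with [|y| <= x^2 sup |q|]. *)
Lemma unif_expansion_smooth_sq s q : smooth s -> smooth q ->
  unif_expansion T (fun x t => s (x * x * q t)) (fun _ => s 0) (fun _ => 0).
Proof.
  intros Hs Hq; destruct (bounded_on_smooth 0 T q Hq) as [Q [HQ Hqb]].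
  destruct (bounded_on_smooth (- Q) Q (Derive s) (smooth_Derive s Hs)) as [B [HB HBd]].
  split; [|split].
  - exists (Rabs (s 0)); split; [apply Rabs_pos | intros; lra].
  - exists 0; split; [lra | intros; rewrite Rabs_R0; lra].
  - exists (B * Q); split; [nra|]; intros x t Ht Hx.
    set (y := x * x * q t); pose proof (sqr_le_1 x Hx).
    assert (Hy : Rabs y <= x * x * Q).
    { unfold y; rewrite Rabs_mult, (Rabs_pos_eq (x * x)) by lra.
      apply Rmult_le_compat_l; [lra | auto]. }
    destruct (MVT_gen s 0 y (Derive s)) as [c [Hc Hmvt]].
    + intros z _; apply Derive_correct, smooth_ex_derive, Hs.
    + intros z _; apply smooth_continuity_pt, Hs.
    + replace (s y - s 0 - x * 0) with (s y - s 0) by ring; rewrite Hmvt, Rminus_0_r.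
      assert (Hcy : Rabs c <= Rabs y).
      { unfold Rmin, Rmax in Hc; destruct (Rle_dec 0 y), Hc.
        - rewrite !Rabs_pos_eq; lra.
        - rewrite !Rabs_left1; lra. }
      assert (Rabs (Derive s c) <= B) by (apply HBd, Rabs_le_between; nra).
      rewrite Rabs_mult; pose proof (Rabs_pos y); pose proof (Rabs_pos (Derive s c)); nra.
Qed.

Lemma is_derive_RInt_unif_expansion F a b : 0 < T -> unif_expansion T F a b ->
  (forall x, Rabs x <= 1 -> ex_RInt (F x) 0 T) -> ex_RInt b 0 T ->
  is_derive (fun x => RInt (F x) 0 T) 0 (RInt b 0 T).
Proof.
  intros HT [_ [_ [C [HC H]]]] HF Hb; apply is_derive_Reals; intros eps Heps.
  assert (HTC : 0 < T * C + 1) by nra.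
  assert (Hd : 0 < Rmin 1 (eps / (T * C + 1))) by (apply Rmin_pos; [lra | apply Rdiv_lt_0_compat; lra]).
  exists (mkposreal _ Hd); intros h Hh Hhd; simpl in Hhd; rewrite Rplus_0_l.
  assert (Hh1 : Rabs h <= 1) by (pose proof (Rmin_l 1 (eps / (T * C + 1))); lra).
  assert (Hhe : Rabs h < eps / (T * C + 1)) by (pose proof (Rmin_r 1 (eps / (T * C + 1))); lra).
  assert (F0 : forall t, 0 <= t <= T -> F 0 t = a t).
  { intros t Ht; specialize (H 0 t Ht); rewrite Rabs_R0, !Rmult_0_l, Rmult_0_r in H.
    specialize (H ltac:(lra)); apply Rabs_le_between in H; lra. }
  assert (Hrem : Rabs (RInt (F h) 0 T - RInt (F 0) 0 T - h * RInt b 0 T) <= T * (C * (h * h))).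
  { assert (I : is_RInt (fun t => F h t - F 0 t - h * b t) 0 T
                  (RInt (F h) 0 T - RInt (F 0) 0 T - h * RInt b 0 T)).
    { pose proof (RInt_correct _ _ _ (HF h Hh1)) as Ih.
      pose proof (RInt_correct _ _ _ (HF 0 ltac:(rewrite Rabs_R0; lra))) as I0.
      pose proof (RInt_correct _ _ _ Hb) as Ib.
      apply (is_RInt_minus (fun t => F h t - F 0 t) (fun t => h * b t)).
      - apply (is_RInt_minus (F h) (F 0)); auto.
      - apply (is_RInt_scal b); auto. }
    rewrite <- (is_RInt_unique _ _ _ _ I).
    eapply Rle_trans; [apply (abs_RInt_le_const _ 0 T (C * (h * h))) | right; ring];
      [lra | eexists; eauto |].
    intros t Ht; rewrite F0 by auto; apply H; auto. }
  replace ((RInt (F h) 0 T - RInt (F 0) 0 T) / h - RInt b 0 T)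
    with ((RInt (F h) 0 T - RInt (F 0) 0 T - h * RInt b 0 T) / h) by (field; auto).
  rewrite Rabs_div by auto; apply Rle_lt_trans with (T * C * Rabs h).
  - apply Rle_div_l; [apply Rabs_pos_lt; auto|].
    assert (Rabs h * Rabs h = h * h) by (rewrite <- Rabs_mult; apply Rabs_pos_eq; nra); nra.
  - apply (Rmult_lt_compat_r (T * C + 1)) in Hhe; [|lra].
    unfold Rdiv in Hhe; rewrite Rmult_assoc, Rinv_l, Rmult_1_r in Hhe by lra.
    pose proof (Rabs_pos h); assert (0 <= T * C) by nra; nra.
Qed.
End UnifExpansion.

Definition unif_expansionM (T : R) (F : R -> R -> M3) (A B : R -> M3) : Prop :=
  forall i j, unif_expansion T (fun x t => ent (F x t) i j) (fun t => ent (A t) i j) (fun t => ent (B t) i j).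
Definition unif_expansionV (T : R) (F : R -> R -> V3) (a b : R -> V3) : Prop :=
  forall i, unif_expansion T (fun x t => vent (F x t) i) (fun t => vent (a t) i) (fun t => vent (b t) i).

Section UnifExpansionM.
Variable T : R.

Ltac expansion_tac :=
  repeat (first [ apply unif_expansion_plus | apply unif_expansion_mult | eassumption ]).

Lemma unif_expansionM_ext F A B F' A' B' : unif_expansionM T F A B ->
  (forall x t, 0 <= t <= T -> Rabs x <= 1 -> F x t = F' x t) ->
  (forall t, 0 <= t <= T -> A t = A' t) -> (forall t, 0 <= t <= T -> B t = B' t) ->
  unif_expansionM T F' A' B'.
Proof.
  intros H E1 E2 E3 i j; eapply unif_expansion_ext; [apply (H i j)|..];
    intros; cbv beta; [rewrite E1 | rewrite E2 | rewrite E3]; auto.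
Qed.

Lemma unif_expansionM_mmul F G A B C D : unif_expansionM T F A B -> unif_expansionM T G C D ->
  unif_expansionM T (fun x t => mmul (F x t) (G x t)) (fun t => mmul (A t) (C t))
    (fun t => madd (mmul (A t) (D t)) (mmul (B t) (C t))).
Proof.
  intros HF HG i j.
  pose proof (HF i 0%nat); pose proof (HF i 1%nat); pose proof (HF i 2%nat);
  pose proof (HG 0%nat j); pose proof (HG 1%nat j); pose proof (HG 2%nat j).
  eapply (unif_expansion_ext T
    (fun x t => ent (F x t) i 0 * ent (G x t) 0 j + ent (F x t) i 1 * ent (G x t) 1 j
                + ent (F x t) i 2 * ent (G x t) 2 j)); [expansion_tac|..];
    intros; cbv beta; rewrite ?ent_madd, !ent_mmul; ring.
Qed.

Lemma unif_expansionM_madd F G A B C D : unif_expansionM T F A B -> unif_expansionM T G C D ->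
  unif_expansionM T (fun x t => madd (F x t) (G x t)) (fun t => madd (A t) (C t))
    (fun t => madd (B t) (D t)).
Proof.
  intros HF HG i j; eapply unif_expansion_ext; [apply unif_expansion_plus; [apply HF | apply HG]|..];
    intros; cbv beta; rewrite ent_madd; reflexivity.
Qed.

Lemma unif_expansionM_mtr F A B : unif_expansionM T F A B ->
  unif_expansionM T (fun x t => mtr (F x t)) (fun t => mtr (A t)) (fun t => mtr (B t)).
Proof.
  intros HF i j; eapply unif_expansion_ext; [apply (HF j i)|..];
    intros; cbv beta; rewrite ent_mtr; reflexivity.
Qed.

Lemma unif_expansionM_const A : smoothM A -> unif_expansionM T (fun _ t => A t) A (fun _ => mzero).
Proof.
  intros HA i j; eapply unif_expansion_ext;
    [apply (unif_expansion_const T (fun t => ent (A t) i j)), bounded_on_smooth, HA|..];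
    intros; rewrite ?ent_mzero; reflexivity.
Qed.

Lemma unif_expansionV_vee F A B : unif_expansionM T F A B ->
  unif_expansionV T (fun x t => vee (F x t)) (fun t => vee (A t)) (fun t => vee (B t)).
Proof. intros HF [|[|i]]; [apply (HF 2 1)%nat | apply (HF 0 2)%nat | apply (HF 1 0)%nat]. Qed.

Lemma unif_expansionV_mapp J F a b : unif_expansionV T F a b ->
  unif_expansionV T (fun x t => mapp J (F x t)) (fun t => mapp J (a t)) (fun t => mapp J (b t)).
Proof.
  intros HF i.
  pose proof (HF 0%nat); pose proof (HF 1%nat); pose proof (HF 2%nat).
  assert (HJ : forall k, unif_expansion T (fun _ _ => ent J i k) (fun _ => ent J i k) (fun _ => 0))
    by (intros k; apply (unif_expansion_const T (fun _ => ent J i k)), bounded_on_smooth, smooth_const).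
  pose proof (HJ 0%nat); pose proof (HJ 1%nat); pose proof (HJ 2%nat).
  eapply (unif_expansion_ext T
    (fun x t => ent J i 0 * vent (F x t) 0 + ent J i 1 * vent (F x t) 1 + ent J i 2 * vent (F x t) 2));
    [expansion_tac|..]; intros; cbv beta; rewrite !vent_mapp; ring.
Qed.

Lemma unif_expansion_dot F G a b c d : unif_expansionV T F a b -> unif_expansionV T G c d ->
  unif_expansion T (fun x t => dot (F x t) (G x t)) (fun t => dot (a t) (c t))
    (fun t => dot (a t) (d t) + dot (b t) (c t)).
Proof.
  intros HF HG.
  pose proof (HF 0%nat); pose proof (HF 1%nat); pose proof (HF 2%nat);
  pose proof (HG 0%nat); pose proof (HG 1%nat); pose proof (HG 2%nat).
  eapply (unif_expansion_ext T
    (fun x t => vent (F x t) 0 * vent (G x t) 0 + vent (F x t) 1 * vent (G x t) 1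
                + vent (F x t) 2 * vent (G x t) 2)); [expansion_tac|..];
    intros; rewrite ?dot_vent; ring.
Qed.
End UnifExpansionM.

(** * First variation of the action *)

(* Entry of [exp (x hat u(t))] by Rodrigues' formula: [q = |u|^2], while [d], [h t], [h2 t]
   are the corresponding entries of the identity, [hat u(t)] and [hat u(t)^2]. *)
Definition rodrigues_entry (d : R) (q h h2 : R -> R) (x t : R) : R :=
  d + rodrigues_s (x * x * q t) * (x * h t) + rodrigues_c (x * x * q t) * (x * x * h2 t).

Section RodriguesEntry.
Variables (T d : R) (q h h2 : R -> R).
Hypotheses (Hq : smooth q) (Hh : smooth h) (Hh2 : smooth h2).

Lemma smooth_rodrigues_entry x : smooth (rodrigues_entry d q h h2 x).
Proof.
  pose proof smooth_rodrigues_s; pose proof smooth_rodrigues_c.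
  unfold rodrigues_entry; smooth_tac;
    apply (smooth_comp _ (fun t => x * x * q t)); smooth_tac.
Qed.

Lemma Derive_rodrigues_entry x t :
  Derive (rodrigues_entry d q h h2 x) t =
  Derive rodrigues_s (x * x * q t) * (x * x * Derive q t) * (x * h t)
  + rodrigues_s (x * x * q t) * (x * Derive h t)
  + (Derive rodrigues_c (x * x * q t) * (x * x * Derive q t) * (x * x * h2 t)
     + rodrigues_c (x * x * q t) * (x * x * Derive h2 t)).
Proof.
  pose proof smooth_rodrigues_s; pose proof smooth_rodrigues_c.
  unfold rodrigues_entry; apply is_derive_unique; auto_derive.
  - repeat split; apply smooth_ex_derive; auto.
  - (* [auto_derive] leaves eta-expanded atoms, which [ring] would treat as distinct *)
    repeat match goal with |- context [fun y : R => ?f y] => change (fun y : R => f y) with f end.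
    toR; ring.
Qed.

Lemma unif_expansion_rodrigues_entry :
  unif_expansion T (rodrigues_entry d q h h2) (fun _ => d) h.
Proof.
  eapply (unif_expansion_ext T
    (fun x t => d + rodrigues_s (x * x * q t) * (x * h t) + rodrigues_c (x * x * q t) * (x * x * h2 t))).
  - apply unif_expansion_plus; [apply unif_expansion_plus|].
    + apply unif_expansion_const, bounded_on_smooth, smooth_const.
    + apply unif_expansion_mult; [apply unif_expansion_smooth_sq; auto; apply smooth_rodrigues_s|].
      apply unif_expansion_linear, bounded_on_smooth, Hh.
    + apply unif_expansion_mult; [apply unif_expansion_smooth_sq; auto; apply smooth_rodrigues_c|].
      apply unif_expansion_quadratic, bounded_on_smooth, Hh2.
  - reflexivity.
  - intros; simpl; ring.
  - intros; simpl; rewrite rodrigues_s0; ring.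
Qed.

Lemma unif_expansion_Derive_rodrigues_entry :
  unif_expansion T (fun x t => Derive (rodrigues_entry d q h h2 x) t) (fun _ => 0) (Derive h).
Proof.
  pose proof smooth_rodrigues_s as Hs; pose proof smooth_rodrigues_c as Hc.
  assert (Hsq : forall s, smooth s ->
    unif_expansion T (fun x t => s (x * x * q t)) (fun _ => s 0) (fun _ => 0))
    by (intros; apply unif_expansion_smooth_sq; auto).
  assert (Hx2 : forall g, smooth g ->
    unif_expansion T (fun x t => x * x * g t) (fun _ => 0) (fun _ => 0))
    by (intros; apply unif_expansion_quadratic, bounded_on_smooth; auto).
  assert (Hx1 : forall g, smooth g -> unif_expansion T (fun x t => x * g t) (fun _ => 0) g)
    by (intros; apply unif_expansion_linear, bounded_on_smooth; auto).
  pose proof (smooth_Derive q Hq) as Hdq.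
  pose proof (unif_expansion_mult_null _ _ _ _ _
    (unif_expansion_mult_null_r _ _ _ _ _ (Hsq _ (smooth_Derive _ Hs)) (Hx2 _ Hdq)) (Hx1 _ Hh)) as E1.
  pose proof (unif_expansion_mult _ _ _ _ _ _ _ (Hsq _ Hs) (Hx1 _ (smooth_Derive _ Hh))) as E2.
  pose proof (unif_expansion_mult_null _ _ _ _ _
    (unif_expansion_mult_null_r _ _ _ _ _ (Hsq _ (smooth_Derive _ Hc)) (Hx2 _ Hdq)) (Hx2 _ Hh2)) as E3.
  pose proof (unif_expansion_mult_null_r _ _ _ _ _ (Hsq _ Hc) (Hx2 _ (smooth_Derive _ Hh2))) as E4.
  apply (unif_expansion_ext _ _ _ _ _ _ _
    (unif_expansion_plus _ _ _ _ _ _ _ (unif_expansion_plus _ _ _ _ _ _ _ E1 E2)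
                                       (unif_expansion_plus _ _ _ _ _ _ _ E3 E4))).
  - intros; symmetry; apply Derive_rodrigues_entry.
  - intros; simpl; ring.
  - intros; simpl; rewrite rodrigues_s0; ring.
Qed.
End RodriguesEntry.

Definition rot_var (dth : R -> V3) (x t : R) : M3 := mexp (mscale x (hat (dth t))).

Section Variation.
Variables (T : R) (L : R -> M3) (dth : R -> V3).
Hypotheses (HL : smoothM L) (Hdth : smoothV dth).

Let q t := dot (dth t) (dth t).
Let h i j t := ent (hat (dth t)) i j.
Let h2 i j t := ent (mmul (hat (dth t)) (hat (dth t))) i j.

Let Hq : smooth q.
Proof. apply smooth_dot; auto. Qed.
Let Hh i j : smooth (h i j).
Proof. apply smoothM_hat; auto. Qed.
Let Hh2 i j : smooth (h2 i j).
Proof. apply smoothM_mmul; apply smoothM_hat; auto. Qed.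

Lemma ent_rot_var x t i j :
  ent (rot_var dth x t) i j = rodrigues_entry (ent mI i j) q (h i j) (h2 i j) x t.
Proof.
  unfold rot_var, rodrigues_entry, q, h, h2; rewrite <- hat_vscale, rodrigues.
  replace (mmul (hat (vscale x (dth t))) (hat (vscale x (dth t))))
    with (mscale (x * x) (mmul (hat (dth t)) (hat (dth t)))) by (destruct (dth t); mext; ring).
  rewrite hat_vscale, !ent_mscale.
  replace (dot (vscale x (dth t)) (vscale x (dth t))) with (x * x * dot (dth t) (dth t))
    by (destruct (dth t); unfold dot; simpl; ring).
  reflexivity.
Qed.

Lemma smoothM_rot_var x : smoothM (rot_var dth x).
Proof.
  intros i j; apply (smooth_ext _ _ (fun t => eq_sym (ent_rot_var x t i j))).
  apply smooth_rodrigues_entry; auto.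
Qed.

Lemma unif_expansionM_rot_var : unif_expansionM T (rot_var dth) (fun _ => mI) (fun t => hat (dth t)).
Proof.
  intros i j; eapply unif_expansion_ext;
    [apply (unif_expansion_rodrigues_entry T (ent mI i j) q (h i j) (h2 i j)); auto|..];
    try reflexivity.
  intros; symmetry; apply ent_rot_var.
Qed.

Lemma unif_expansionM_mderiv_rot_var :
  unif_expansionM T (fun x t => mderiv (rot_var dth x) t) (fun _ => mzero) (fun t => hat (vderiv dth t)).
Proof.
  intros i j; eapply unif_expansion_ext;
    [apply (unif_expansion_Derive_rodrigues_entry T (ent mI i j) q (h i j) (h2 i j)); auto|..].
  - intros x t _ _; rewrite ent_mderiv; apply Derive_ext; intros; symmetry; apply ent_rot_var.
  - intros; rewrite ent_mzero; reflexivity.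
  - intros; rewrite <- mderiv_hat, ent_mderiv; reflexivity.
Qed.

Lemma smoothM_Lvar x : smoothM (Lvar L dth x).
Proof. apply (smoothM_mmul (rot_var dth x) L); auto using smoothM_rot_var. Qed.

Lemma unif_expansionM_Lvar : unif_expansionM T (Lvar L dth) L (fun t => mmul (hat (dth t)) (L t)).
Proof.
  eapply unif_expansionM_ext;
    [apply (unif_expansionM_mmul T (rot_var dth) (fun _ t => L t));
       [apply unif_expansionM_rot_var | apply unif_expansionM_const; auto]|..].
  - reflexivity.
  - intros; apply mmul_mI_l.
  - intros; cbv beta; mext; ring.
Qed.

Lemma unif_expansionM_mderiv_Lvar :
  unif_expansionM T (fun x t => mderiv (Lvar L dth x) t) (mderiv L)
    (fun t => madd (mmul (hat (vderiv dth t)) (L t)) (mmul (hat (dth t)) (mderiv L t))).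
Proof.
  eapply unif_expansionM_ext.
  - apply (unif_expansionM_madd T (fun x t => mmul (mderiv (rot_var dth x) t) (L t))
                                 (fun x t => mmul (rot_var dth x t) (mderiv L t))).
    + apply (unif_expansionM_mmul T _ (fun _ t => L t));
        [apply unif_expansionM_mderiv_rot_var | apply unif_expansionM_const; auto].
    + apply (unif_expansionM_mmul T _ (fun _ t => mderiv L t));
        [apply unif_expansionM_rot_var | apply unif_expansionM_const, smoothM_mderiv; auto].
  - intros; symmetry; apply (mderiv_mmul (rot_var dth x) L); auto using smoothM_rot_var.
  - intros; cbv beta; mext; ring.
  - intros; cbv beta; mext; ring.
Qed.

Lemma unif_expansionM_body_velocity :
  unif_expansionM T (fun x t => mmul (mtr (Lvar L dth x t)) (mderiv (Lvar L dth x) t))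
    (fun t => mmul (mtr (L t)) (mderiv L t))
    (fun t => mmul (mtr (L t)) (mmul (hat (vderiv dth t)) (L t))).
Proof.
  eapply unif_expansionM_ext;
    [apply unif_expansionM_mmul;
       [apply unif_expansionM_mtr, unif_expansionM_Lvar | apply unif_expansionM_mderiv_Lvar]|..].
  - reflexivity.
  - reflexivity.
  - (* the two [hat (dth t)] terms cancel because [hat (dth t)] is skew *)
    intros; cbv beta; destruct (dth t); mext; ring.
Qed.
End Variation.

Lemma kinetic_variation_eq A Ad J vd : in_SO3 A -> mtr J = J ->
  madd (mmul Ad (mtr A)) (mtr (mmul Ad (mtr A))) = mzero ->
  / 2 * (dot (vee (mmul (mtr A) Ad)) (mapp J (vee (mmul (mtr A) (mmul (hat vd) A))))
         + dot (vee (mmul (mtr A) (mmul (hat vd) A))) (mapp J (vee (mmul (mtr A) Ad))))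
  = dot (mapp (mmul A (mmul J (mtr A))) (vee (mmul Ad (mtr A)))) vd.
Proof.
  intros HA HJ Hskew.
  (* both body velocities are [mtr A] applied to the spatial ones [w] and [vd] *)
  assert (HW : vee (mmul (mtr A) Ad) = mapp (mtr A) (vee (mmul Ad (mtr A)))).
  { rewrite <- (SO3_madj A HA) at 2; rewrite <- vee_conj, hat_vee_skew by auto.
    rewrite <- !mmul_assoc, (proj1 HA), mmul_mI_r; reflexivity. }
  rewrite vee_conj, (SO3_madj A HA), HW; set (w := vee (mmul Ad (mtr A))).
  rewrite (dot_mapp_sym J (mapp (mtr A) w)) by auto.
  rewrite !mapp_mmul, dot_mapp_mtr, dot_comm; field.
Qed.

Section FirstVariation.
Variables (T : R) (J : M3) (L : R -> M3).
Hypotheses (HT : 0 < T) (HJ : mtr J = J) (HL : smoothM L)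
  (HSO : forall t, 0 <= t <= T -> in_SO3 (L t)).

Lemma smoothV_pi_sp : smoothV (pi_sp J L).
Proof.
  unfold pi_sp, jmat, w_sp; apply smoothV_mapp.
  - apply smoothM_mmul, smoothM_mmul, smoothM_mtr; auto using smoothM_const.
  - apply smoothV_vee, smoothM_mmul, smoothM_mtr; auto using smoothM_mderiv.
Qed.

Lemma angular_velocity_skew t : 0 <= t <= T ->
  madd (mmul (mderiv L t) (mtr (L t))) (mtr (mmul (mderiv L t) (mtr (L t)))) = mzero.
Proof.
  intros Ht; apply M3_ext; intros i j _ _.
  assert (D : ent (mderiv (fun s => mmul (L s) (mtr (L s))) t) i j = 0).
  { rewrite ent_mderiv; apply (Derive_const_on 0 T); auto.
    - apply smooth_ex_derive, (smoothM_mmul L (fun s => mtr (L s))), smoothM_mtr; auto.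
    - intros s Hs; rewrite !SO3_mmul_mtr; auto. }
  rewrite (mderiv_mmul L (fun s => mtr (L s))), mderiv_mtr in D by auto using smoothM_mtr.
  rewrite ent_madd, !ent_mmul, !ent_mtr in D.
  rewrite ent_mzero, ent_madd, ent_mtr, !ent_mmul, !ent_mtr; lra.
Qed.

Lemma smooth_kinetic A : smoothM A -> smooth (fun t => kinetic J (A t) (mderiv A t)).
Proof.
  intros HA; unfold kinetic; apply smooth_mult; [apply smooth_const|].
  assert (HW : smoothV (fun t => vee (mmul (mtr (A t)) (mderiv A t))))
    by (apply smoothV_vee, smoothM_mmul; auto using smoothM_mtr, smoothM_mderiv).
  apply smooth_dot; auto; apply smoothV_mapp; auto using smoothM_const.
Qed.

Lemma is_derive_action_var dth : smoothV dth ->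
  is_derive (action_var J T L dth) 0 (RInt (fun t => dot (pi_sp J L t) (vderiv dth t)) 0 T).
Proof.
  intros Hdth; unfold action_var.
  pose proof (unif_expansionM_body_velocity T L dth HL Hdth) as HV.
  apply (is_derive_RInt_unif_expansion T _ (fun t => kinetic J (L t) (mderiv L t))); auto.
  - eapply unif_expansion_ext.
    + apply unif_expansion_mult;
        [apply (unif_expansion_const T (fun _ => / 2)), bounded_on_smooth, smooth_const|].
      apply unif_expansion_dot; [|apply unif_expansionV_mapp]; apply unif_expansionV_vee, HV.
    + reflexivity.
    + reflexivity.
    + intros t Ht; cbv beta; unfold pi_sp, jmat, w_sp.
      rewrite <- kinetic_variation_eq by auto using angular_velocity_skew; ring.
  - intros x _; apply smooth_ex_RInt, smooth_kinetic, smoothM_Lvar; auto.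
  - apply smooth_ex_RInt, smooth_dot; auto using smoothV_pi_sp, smoothV_vderiv.
Qed.

Lemma is_derive_action_var_by_parts dth : smoothV dth -> dth 0 = vzero -> dth T = vzero ->
  is_derive (action_var J T L dth) 0 (- RInt (fun t => dot (vderiv (pi_sp J L) t) (dth t)) 0 T).
Proof.
  intros Hdth H0 H1; rewrite <- RInt_dot_by_parts by auto using smoothV_pi_sp.
  apply is_derive_action_var; auto.
Qed.
End FirstVariation.

(** * Kinematics *)

Definition tangent (d p : V3) : V3 := vsub p (vscale (dot d p) d).

Lemma cov_d3_tangent D3 L v t : cov_d3 D3 L v t = tangent (d3 D3 L t) (vderiv v t).
Proof. reflexivity. Qed.

Lemma dot_tangent_unit d p : dot d d = 1 -> dot (tangent d p) d = 0.
Proof.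
  intros H; transitivity (dot d p * (1 - dot d d)); [|rewrite H; ring].
  destruct d, p; unfold tangent, dot; simpl; ring.
Qed.

Lemma dot_tangent_self d p : dot d d = 1 -> dot p (tangent d p) = dot (tangent d p) (tangent d p).
Proof.
  intros H; transitivity (dot (tangent d p) (tangent d p) + dot d p ^ 2 * (1 - dot d d));
    [|rewrite H; ring].
  destruct d, p; unfold tangent, dot; simpl; ring.
Qed.

Lemma tangent_eq0 d p x : tangent d p = vzero -> dot p x = dot d p * dot x d.
Proof.
  unfold tangent; generalize (dot d p) as c; intros c H.
  destruct d, p, x; unfold vsub, vscale, vzero, dot in *; simpl in *; injection H; intros; nra.
Qed.

Section Kinematics.
Variables (T : R) (J : M3) (D3 : V3) (L : R -> M3).
Hypotheses (HT : 0 < T) (HD3 : dot D3 D3 = 1) (HJ : mtr J = J) (HL : smoothM L)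
  (HSO : forall t, 0 <= t <= T -> in_SO3 (L t)).

Lemma d3_unit t : 0 <= t <= T -> dot (d3 D3 L t) (d3 D3 L t) = 1.
Proof. intros Ht; unfold d3; rewrite dot_mapp_orth; auto; apply HSO, Ht. Qed.

Lemma smoothV_d3 : smoothV (d3 D3 L).
Proof. apply smoothV_mapp; auto using smoothV_const. Qed.

Lemma smoothV_cov_pi_sp : smoothV (cov_d3 D3 L (pi_sp J L)).
Proof.
  pose proof (smoothV_pi_sp J L HL); pose proof smoothV_d3.
  apply smoothV_vsub; auto using smoothV_vderiv.
  apply smoothV_vscale; auto; apply smooth_dot; auto using smoothV_vderiv.
Qed.

Lemma parallel_of_variational mu :
  (forall dth, smooth_V dth -> dth 0 = vzero -> dth T = vzero ->
     exists dA, is_derive (action_var J T L dth) 0 dA /\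
                dA + RInt (fun t => mu t * dot (dth t) (d3 D3 L t)) 0 T = 0) ->
  forall t, 0 <= t <= T -> cov_d3 D3 L (pi_sp J L) t = vzero.
Proof.
  intros Hvar; set (g := cov_d3 D3 L (pi_sp J L)).
  pose proof smoothV_cov_pi_sp as Hg; fold g in Hg.
  apply (smoothV_eq0_of_RInt 0 T HT g Hg).
  set (dth := fun t => vscale ((t - 0) * (T - t)) (g t)).
  assert (Hdth : smoothV dth)
    by (apply smoothV_vscale; auto; apply smooth_mult; apply smooth_minus;
        auto using smooth_id, smooth_const).
  assert (Hd0 : dth 0 = vzero) by (unfold dth; vext; ring).
  assert (HdT : dth T = vzero) by (unfold dth; vext; ring).
  destruct (Hvar dth (proj2 (smooth_V_smoothV dth) Hdth) Hd0 HdT) as [dA [HdA Heq]].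
  pose proof (is_derive_action_var_by_parts T J L HT HJ HL HSO dth Hdth Hd0 HdT) as HdA'.
  rewrite <- (is_derive_unique _ _ _ HdA), (is_derive_unique _ _ _ HdA') in Heq.
  assert (Hint : forall t, 0 <= t <= T -> dot (g t) (d3 D3 L t) = 0)
    by (intros; unfold g; rewrite cov_d3_tangent; apply dot_tangent_unit, d3_unit; auto).
  rewrite (RInt_ext (fun t => mu t * dot (dth t) (d3 D3 L t)) (fun _ => 0)), RInt_const in Heq.
  2:{ intros t Ht; rewrite Rmin_left, Rmax_right in Ht by lra.
      unfold dth; cbv beta; rewrite dot_vscale_l, Hint by lra; toR; ring. }
  rewrite <- (RInt_ext (fun t => dot (vderiv (pi_sp J L) t) (dth t))).
  - change (scal (T - 0) 0) with ((T - 0) * 0) in Heq; lra.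
  - intros t Ht; rewrite Rmin_left, Rmax_right in Ht by lra.
    unfold dth, g; cbv beta; rewrite dot_vscale_r, cov_d3_tangent, dot_tangent_self by (apply d3_unit; lra).
    reflexivity.
Qed.

Lemma variational_of_parallel :
  (forall t, 0 <= t <= T -> cov_d3 D3 L (pi_sp J L) t = vzero) ->
  exists mu, cont_on 0 T mu /\
  forall dth, smooth_V dth -> dth 0 = vzero -> dth T = vzero ->
    exists dA, is_derive (action_var J T L dth) 0 dA /\
               dA + RInt (fun t => mu t * dot (dth t) (d3 D3 L t)) 0 T = 0.
Proof.
  intros Hpar; exists (fun t => dot (d3 D3 L t) (vderiv (pi_sp J L) t)); split.
  - apply cont_on_continuous; intros; apply smooth_continuity_pt, smooth_dot;
      auto using smoothV_d3, smoothV_vderiv, smoothV_pi_sp.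
  - intros dth Hdth H0 H1; apply smooth_V_smoothV in Hdth.
    eexists; split; [apply (is_derive_action_var_by_parts T J L); auto|].
    rewrite (RInt_ext (fun t => dot (d3 D3 L t) (vderiv (pi_sp J L) t) * dot (dth t) (d3 D3 L t))
                      (fun t => dot (vderiv (pi_sp J L) t) (dth t))); [toR; ring|].
    intros t Ht; rewrite Rmin_left, Rmax_right in Ht by lra.
    rewrite (tangent_eq0 _ _ _ (Hpar t ltac:(lra))); reflexivity.
Qed.

Lemma variational_iff_parallel :
  (exists mu, cont_on 0 T mu /\
     forall dth, smooth_V dth -> dth 0 = vzero -> dth T = vzero ->
       exists dA, is_derive (action_var J T L dth) 0 dA /\
                  dA + RInt (fun t => mu t * dot (dth t) (d3 D3 L t)) 0 T = 0) <->
  (forall t, 0 <= t <= T -> cov_d3 D3 L (pi_sp J L) t = vzero).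
Proof.
  split; [intros [mu [_ Hvar]]; apply (parallel_of_variational mu Hvar) | apply variational_of_parallel].
Qed.

Section Eigen.
Variable lam : R.
Hypothesis Hlam : mapp J D3 = vscale lam D3.

Lemma pi_par_eq t : 0 <= t <= T -> pi_par J D3 L t = lam * w_par D3 L t.
Proof.
  intros Ht; unfold pi_par, pi_sp, jmat, d3, w_par.
  rewrite !mapp_mmul, dot_mapp_orth by apply HSO, Ht.
  rewrite dot_comm, dot_mapp_sym, Hlam, dot_vscale_r, dot_mapp_mtr by auto; reflexivity.
Qed.

Section NoTwist.
Hypothesis Hnt : forall t, 0 <= t <= T -> w_par D3 L t = 0.

Lemma pi_par_eq0 t : 0 <= t <= T -> pi_par J D3 L t = 0.
Proof. intros Ht; rewrite pi_par_eq, Hnt by auto; ring. Qed.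

Lemma Derive_pi_par_eq0 t : 0 <= t <= T -> Derive (pi_par J D3 L) t = 0.
Proof.
  intros Ht; apply (Derive_const_on 0 T); auto.
  - apply smooth_ex_derive, smooth_dot; auto using smoothV_pi_sp, smoothV_d3.
  - intros s Hs; rewrite !pi_par_eq0; auto.
Qed.

Lemma vderiv_pi_perp t : 0 <= t <= T -> vderiv (pi_perp J D3 L) t = vderiv (pi_sp J L) t.
Proof.
  intros Ht; pose proof (smoothV_pi_sp J L HL) as Hpi; pose proof smoothV_d3 as Hd.
  assert (Hperp : smoothV (pi_perp J D3 L)).
  { unfold pi_perp, pi_par; apply smoothV_vsub; auto.
    apply smoothV_vscale; auto; apply smooth_dot; auto. }
  apply V3_ext; intros i _; rewrite !vent_vderiv.
  apply (Derive_eq_on 0 T); auto using smooth_ex_derive.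
  intros s Hs; unfold pi_perp; rewrite vent_vsub, vent_vscale, pi_par_eq0 by auto; toR; ring.
Qed.

Lemma cov_pi_perp t : 0 <= t <= T -> cov_d3 D3 L (pi_perp J D3 L) t = cov_d3 D3 L (pi_sp J L) t.
Proof. intros Ht; unfold cov_d3; rewrite vderiv_pi_perp; auto. Qed.

Lemma sys_ii_no_twist mu t : 0 <= t <= T ->
  sys_ii J D3 L mu t <->
  cov_d3 D3 L (pi_sp J L) t = vzero /\ dot (pi_perp J D3 L t) (vderiv (d3 D3 L) t) + mu t = 0.
Proof.
  intros Ht; unfold sys_ii.
  rewrite cov_pi_perp, pi_par_eq0, Derive_pi_par_eq0, vadd_vscale0, Rplus_0_l by auto.
  pose proof (Hnt t Ht); unfold w_par in *; tauto.
Qed.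

Lemma sys_pt_no_twist mu t : 0 <= t <= T ->
  sys_pt J D3 L mu t <->
  cov_d3 D3 L (pi_sp J L) t = vzero /\ dot (pi_perp J D3 L t) (vderiv (d3 D3 L) t) + mu t = 0.
Proof. intros Ht; unfold sys_pt; rewrite cov_pi_perp by auto; pose proof (Hnt t Ht); tauto. Qed.
End NoTwist.

Lemma sys_ii_iff_parallel :
  (exists mu, forall t, 0 <= t <= T -> sys_ii J D3 L mu t) <->
  (forall t, 0 <= t <= T -> w_par D3 L t = 0) /\
  (forall t, 0 <= t <= T -> cov_d3 D3 L (pi_sp J L) t = vzero).
Proof.
  split.
  - intros [mu Hmu].
    assert (Hnt : forall t, 0 <= t <= T -> w_par D3 L t = 0) by (intros t Ht; apply (Hmu t Ht)).
    split; auto; intros t Ht; apply (sys_ii_no_twist Hnt mu t Ht), Hmu, Ht.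
  - intros [Hnt Hpar]; exists (fun t => - dot (pi_perp J D3 L t) (vderiv (d3 D3 L) t)).
    intros t Ht; apply (sys_ii_no_twist Hnt); auto; split; [auto | ring].
Qed.

Lemma sys_ii_iff_sys_pt mu :
  (forall t, 0 <= t <= T -> sys_ii J D3 L mu t) <-> (forall t, 0 <= t <= T -> sys_pt J D3 L mu t).
Proof.
  split; intros Hsys t Ht;
    assert (Hnt : forall s, 0 <= s <= T -> w_par D3 L s = 0) by (intros s Hs; apply (Hsys s Hs));
    [apply (sys_pt_no_twist Hnt), (sys_ii_no_twist Hnt) | apply (sys_ii_no_twist Hnt), (sys_pt_no_twist Hnt)];
    auto.
Qed.
End Eigen.
End Kinematics.

Theorem theorem5 (D1 D2 D3 : V3) (J : M3) (T : R) (L : R -> M3) :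
  0 < T ->
  (* {D1,D2,D3} positively oriented orthonormal basis *)
  dot D1 D1 = 1 -> dot D2 D2 = 1 -> dot D3 D3 = 1 ->
  dot D1 D2 = 0 -> dot D1 D3 = 0 -> dot D2 D3 = 0 ->
  mdet (mcols D1 D2 D3) = 1 ->
  (* J symmetric positive definite with eigenvector D3 *)
  mtr J = J ->
  (forall v : V3, v <> vzero -> 0 < dot v (mapp J v)) ->
  (exists lam : R, mapp J D3 = vscale lam D3) ->
  (* L smooth curve [0,T] -> SO(3) *)
  smooth_M L ->
  (forall t, 0 <= t <= T -> in_SO3 (L t)) ->
  ( ( (forall t, 0 <= t <= T -> dot (w_sp L t) (d3 D3 L t) = 0) /\
      exists mu : R -> R, cont_on 0 T mu /\
        forall dth : R -> V3, smooth_V dth -> dth 0 = vzero -> dth T = vzero ->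
          exists dA : R,
            is_derive (action_var J T L dth) 0 dA /\
            dA + RInt (fun t => mu t * dot (dth t) (d3 D3 L t)) 0 T = 0 )
    <->
    (exists mu : R -> R, forall t, 0 <= t <= T -> sys_ii J D3 L mu t) )
  /\
  (forall mu : R -> R,
     (forall t, 0 <= t <= T -> sys_ii J D3 L mu t) <->
     (forall t, 0 <= t <= T -> sys_pt J D3 L mu t)).
Proof.
  intros HT _ _ HD3 _ _ _ _ HJ _ [lam Hlam] HLs HSO.
  pose proof (smooth_M_smoothM L HLs) as HL.
  split.
  - rewrite (sys_ii_iff_parallel T J D3 L HT HJ HL HSO lam Hlam),
      (variational_iff_parallel T J D3 L HT HD3 HJ HL HSO).
    reflexivity.
  - apply (sys_ii_iff_sys_pt T J D3 L HT HJ HL HSO lam Hlam).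
Qed.
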